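(* Let $\Bbbk$ be an algebraically closed field of characteristic $0$, let $P=\Bbbk[x_1,\dots,x_n]$ be a quadratic Poisson algebra with Poisson enveloping algebra $(U(P),\alpha,\beta)$, and let $\phi$ be a graded Poisson automorphism of $P$. Then there exists a unique graded automorphism $\widetilde\phi$ of $U(P)$ such that $\alpha\circ\phi=\widetilde\phi\circ\alpha$ and $\beta\circ\phi=\widetilde\phi\circ\beta$; it is given by $\widetilde\phi(x_i)=\phi(x_i)$ and $\widetilde\phi(y_i)=\sum_{j=1}^n\frac{\partial\phi(x_i)}{\partial x_j}y_j$.
   Context: $P$ has the standard grading and is quadratic: $\{P_1,P_1\}\subseteq P_2$. $U(P)$ is the $\Bbbk$-algebra generated by $x_1,\dots,x_n,y_1,\dots,y_n$ (all of degree $1$) subject to $[x_i,x_j]=0$, $[y_i,y_j]=\sum_k\frac{\partial\{x_i,x_j\}}{\partial x_k}y_k$, $[y_i,x_j]=\{x_i,x_j\}$; the maps $\alpha,\beta:P\to U(P)$ are $\alpha(f)=f$ and $\beta(f)=\sum_{k=1}^n\frac{\partial f}{\partial x_k}y_k$. A graded Poisson automorphism of $P$ is a degree-preserving bijective map that is an algebra and Lie algebra homomorphism. *)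

From HB Require Import structures.
From mathcomp Require Import all_boot all_algebra.
From mathcomp Require Import generic_quotient.
From mathcomp Require Import finmap monalg mpoly.
From Stdlib Require Import ClassicalEpsilon.

Set Implicit Arguments.
Unset Strict Implicit.
Unset Printing Implicit Defensive.

Import GRing.Theory.
Local Open Scope ring_scope.

Notation "{ 'mpoly' T [ n ] }" := (mpoly.mpoly n T) : type_scope.

Definition is_poisson_bracket (k : fieldType) (n : nat)
    (br : {mpoly k[n]} -> {mpoly k[n]} -> {mpoly k[n]}) : Prop :=
  [/\ forall (c : k) (p q r : {mpoly k[n]}), br (c *: p + q) r = c *: br p r + br q r,
      forall (c : k) (p q r : {mpoly k[n]}), br r (c *: p + q) = c *: br r p + br r q,
      forall p q : {mpoly k[n]}, br p q = - br q p,
      forall p q r : {mpoly k[n]}, br p (br q r) + br q (br r p) + br r (br p q) = 0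
    & forall p q r : {mpoly k[n]}, br p (q * r) = br p q * r + q * br p r].

Definition is_quadratic (k : fieldType) (n : nat)
    (br : {mpoly k[n]} -> {mpoly k[n]} -> {mpoly k[n]}) : Prop :=
  forall p q : {mpoly k[n]}, p \is 1.-homog -> q \is 1.-homog -> br p q \is 2.-homog.

Definition graded_poisson_aut (k : fieldType) (n : nat)
    (br : {mpoly k[n]} -> {mpoly k[n]} -> {mpoly k[n]})
    (phi : {mpoly k[n]} -> {mpoly k[n]}) : Prop :=
  [/\ bijective phi,
      forall d (p : {mpoly k[n]}), p \is d.-homog -> phi p \is d.-homog,
      [/\ forall p q : {mpoly k[n]}, phi (p + q) = phi p + phi q,
          forall (c : k) (p : {mpoly k[n]}), phi (c *: p) = c *: phi p,
          forall p q : {mpoly k[n]}, phi (p * q) = phi p * phi q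
        & phi 1 = 1]
    & forall p q : {mpoly k[n]}, phi (br p q) = br (phi p) (phi q)].

(* The free associative algebra on x_1..x_n (inl i), y_1..y_n (inr i): *)

Definition word (n : nat) := seq ('I_n + 'I_n)%type.
HB.instance Definition _ n := Choice.on (word n).

Lemma word_unitm n (x y : word n) : x ++ y = [::] -> x = [::] /\ y = [::].
Proof. by case: x => //; case: y. Qed.

HB.instance Definition _ n := monalg.Choice_isMonomialDef.Build (word n)
  (@catA _) (@cat0s _) (@cats0 _) (@word_unitm n).

Definition freealg (k : fieldType) (n : nat) := monalg.malg (word n) k.

Definition fX (k : fieldType) (n : nat) (i : 'I_n) : freealg k n :=
  monalg.mkmalgU ([:: inl i] : word n) 1.
Definition fY (k : fieldType) (n : nat) (i : 'I_n) : freealg k n :=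
  monalg.mkmalgU ([:: inr i] : word n) 1.

Definition fhomog (k : fieldType) (n : nat) (d : nat) (f : freealg k n) : Prop :=
  forall w : word n, w \in monalg.msupp f -> size w = d.

(* a polynomial f in the x's, viewed in the free algebra (in U(P) the x's
   commute, so the ordering of the variables is immaterial) *)
Definition fembed (k : fieldType) (n : nat) (f : {mpoly k[n]}) : freealg k n :=
  \sum_(m <- mpoly.msupp f)
     mpoly.mcoeff m f *: \prod_(i < n) fX k i ^+ (m i).

Definition UPrel (k : fieldType) (n : nat)
    (br : {mpoly k[n]} -> {mpoly k[n]} -> {mpoly k[n]})
    (c : 'I_3) (i j : 'I_n) : freealg k n :=
  let xij := br (mpoly.mpolyX _ (mpoly.mnm1 i)) (mpoly.mpolyX _ (mpoly.mnm1 j)) in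
  if val c == 0%N then fX k i * fX k j - fX k j * fX k i
  else if val c == 1%N then
    fY k i * fY k j - fY k j * fY k i
      - \sum_(l < n) fembed (mpoly.mderiv l xij) * fY k l
  else fY k i * fX k j - fX k j * fY k i - fembed xij.

Definition UPideal (k : fieldType) (n : nat)
    (br : {mpoly k[n]} -> {mpoly k[n]} -> {mpoly k[n]}) (f : freealg k n) : Prop :=
  exists s : seq (freealg k n * freealg k n * ('I_3 * 'I_n * 'I_n)),
    f = \sum_(t <- s) t.1.1 * UPrel br t.2.1.1 t.2.1.2 t.2.2 * t.1.2.

Definition pbool (P : Prop) : bool :=
  if excluded_middle_informative P then true else false.

Lemma pboolP (P : Prop) : reflect P (pbool P).
Proof. by rewrite /pbool; case: excluded_middle_informative => h; constructor. Qed.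

Definition UPeq (k : fieldType) (n : nat)
    (br : {mpoly k[n]} -> {mpoly k[n]} -> {mpoly k[n]}) : rel (freealg k n) :=
  fun f g => pbool (UPideal br (f - g)).

Lemma UPeq_refl k n br : reflexive (@UPeq k n br).
Proof.
move=> f; apply/pboolP; exists [::]; by rewrite subrr big_nil.
Qed.

Lemma UPeq_sym k n br : ssrbool.symmetric (@UPeq k n br).
Proof.
suff H : forall f g, @UPeq k n br f g -> UPeq br g f.
  by move=> f g; apply/idP/idP; apply: H.
move=> f g /pboolP [s hs]; apply/pboolP.
exists [seq ((- t.1.1, t.1.2), t.2) | t <- s].
rewrite big_map -[g - f]opprB hs -sumrN; apply: eq_bigr => t _ /=.
by rewrite !mulNr.
Qed.

Lemma UPeq_trans k n br : transitive (@UPeq k n br).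
Proof.
move=> g f h /pboolP [s hs] /pboolP [s' hs']; apply/pboolP; exists (s ++ s').
by rewrite big_cat /= -hs -hs' addrA subrK.
Qed.

Definition UPequiv (k : fieldType) (n : nat)
    (br : {mpoly k[n]} -> {mpoly k[n]} -> {mpoly k[n]}) : equiv_rel (freealg k n) :=
  EquivRel (@UPeq k n br) (@UPeq_refl k n br) (@UPeq_sym k n br)
    (@UPeq_trans k n br).

Definition UP (k : fieldType) (n : nat)
    (br : {mpoly k[n]} -> {mpoly k[n]} -> {mpoly k[n]}) :=
  {eq_quot (UPequiv br)}%qT.

Definition UPpi (k : fieldType) (n : nat)
    (br : {mpoly k[n]} -> {mpoly k[n]} -> {mpoly k[n]}) (f : freealg k n) : UP br := \pi_(UP br)%qT f.

Definition UPadd (k : fieldType) (n : nat)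
    (br : {mpoly k[n]} -> {mpoly k[n]} -> {mpoly k[n]}) (u v : UP br) : UP br := UPpi br (repr u + repr v)%qT.
Definition UPmul (k : fieldType) (n : nat)
    (br : {mpoly k[n]} -> {mpoly k[n]} -> {mpoly k[n]}) (u v : UP br) : UP br := UPpi br (repr u * repr v)%qT.
Definition UPscale (k : fieldType) (n : nat)
    (br : {mpoly k[n]} -> {mpoly k[n]} -> {mpoly k[n]}) (c : k) (u : UP br) : UP br := UPpi br (c *: repr u)%qT.
Definition UPone (k : fieldType) (n : nat)
    (br : {mpoly k[n]} -> {mpoly k[n]} -> {mpoly k[n]}) : UP br := UPpi br (1 : freealg k n).

Definition UPdeg (k : fieldType) (n : nat)
    (br : {mpoly k[n]} -> {mpoly k[n]} -> {mpoly k[n]}) (d : nat) (u : UP br) : Prop :=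
  exists f : freealg k n, fhomog d f /\ u = UPpi br f.

Definition UPalpha (k : fieldType) (n : nat)
    (br : {mpoly k[n]} -> {mpoly k[n]} -> {mpoly k[n]}) (f : {mpoly k[n]}) : UP br := UPpi br (fembed f).
Definition UPbeta (k : fieldType) (n : nat)
    (br : {mpoly k[n]} -> {mpoly k[n]} -> {mpoly k[n]}) (f : {mpoly k[n]}) : UP br :=
  UPpi br (\sum_(l < n) fembed (mpoly.mderiv l f) * fY k l).

Definition UPgraded_aut (k : fieldType) (n : nat)
    (br : {mpoly k[n]} -> {mpoly k[n]} -> {mpoly k[n]}) (psi : UP br -> UP br) : Prop :=
  [/\ bijective psi,
      forall d u, @UPdeg k n br d u -> @UPdeg k n br d (psi u)
    & [/\ forall u v, psi (UPadd u v) = UPadd (psi u) (psi v),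
          forall (c : k) u, psi (UPscale c u) = UPscale c (psi u),
          forall u v, psi (UPmul u v) = UPmul (psi u) (psi v)
        & psi (UPone br) = UPone br]].

From HB Require Import structures.
From mathcomp Require Import all_boot all_algebra.
From mathcomp Require Import generic_quotient finmap monalg mpoly.

(* U(P) is the free algebra on the x_i, y_i modulo the ideal of its defining
   relations, so psi is induced by the algebra endomorphism of the free
   algebra sending x_i to (a representative of) alpha(phi x_i) and y_i to
   beta(phi x_i).  It kills the relations: phi x_i is a linear form because phi
   is graded, so the relations between the alpha(phi x_i), beta(phi x_i) are
   linear combinations of those between the alpha(x_i), beta(x_i), and phi
   preserves the bracket.  Then alpha o phi = psi o alpha since both are
   algebra maps agreeing on the x_i, and the chain rule
   d_r (phi p) = sum_l phi (d_l p) * d_r (phi x_l) gives beta o phi = psi o beta.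
   Uniqueness holds because U(P) is generated by the alpha(x_i), beta(x_i); by
   uniqueness again, the map built from phi^-1 is inverse to psi. *)

Set Implicit Arguments.
Unset Strict Implicit.
Unset Printing Implicit Defensive.

Import GRing.Theory.
Local Open Scope ring_scope.

Section Polynomials.
Variables (k : fieldType) (n : nat).
Local Notation P := (mpoly.mpoly n k).

Lemma mpoly_ind_alg (Q : P -> Prop) : Q 1 -> (forall i, Q 'X_i) ->
    (forall p q, Q p -> Q q -> Q (p + q)) -> (forall c p, Q p -> Q (c *: p)) ->
    (forall p q, Q p -> Q q -> Q (p * q)) ->
  forall p, Q p.
Proof.
move=> Q1 QX QD QZ QM; elim/mpolyind => [|c m p _ _ Qp].
  by rewrite -(scale0r 1); apply: QZ.
apply: QD => //; apply: QZ; rewrite mpolyXE_id.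
apply: (big_ind Q) => // i _; elim: (m i) => [|e IHe]; first by rewrite expr0.
by rewrite exprS; apply: QM.
Qed.

Lemma mderivXU (i l : 'I_n) : ('X_i : P)^`M(l) = (i == l)%:R%:MP.
Proof.
rewrite mderivX mnm1E; have [->|_] := eqVneq i l; last by rewrite scale0r mpolyC0.
have -> : (U_(l) - U_(l))%MM = 0%MM by apply/mnmP => j; rewrite mnmBE subnn mnm0E.
by rewrite mpolyX0 scale1r mpolyC1.
Qed.

Lemma mderiv_lrmorph (phi : {lrmorphism P -> P}) (r : 'I_n) (p : P) :
  (phi p)^`M(r) = \sum_(l < n) phi p^`M(l) * (phi 'X_l)^`M(r).
Proof.
have phiC c : phi c%:MP = c%:MP by rewrite -alg_mpolyC linearZ rmorph1.
elim/mpoly_ind_alg: p => [|i|p q Dp Dq|c p Dp|p q Dp Dq].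
- rewrite rmorph1 -mpolyC1 mderivC big1 // => l _.
  by rewrite mderivC rmorph0 mul0r.
- rewrite (bigD1 i) //= big1 ?addr0 => [|l /negbTE ne_li].
    by rewrite mderivXU eqxx phiC mpolyC1 mul1r.
  by rewrite mderivXU eq_sym ne_li phiC mpolyC0 mul0r.
- rewrite rmorphD mderivD Dp Dq -big_split; apply: eq_bigr => l _.
  by rewrite mderivD rmorphD mulrDl.
- rewrite linearZ mderivZ Dp scaler_sumr; apply: eq_bigr => l _.
  by rewrite mderivZ linearZ scalerAl.
- rewrite rmorphM mderivM Dp Dq mulr_suml mulr_sumr -big_split.
  apply: eq_bigr => l _.
  by rewrite mderivM rmorphD !rmorphM mulrDl mulrAC mulrA.
Qed.

Lemma homog1E (p : P) : p \is 1.-homog -> p = \sum_(l < n) p@_U_(l) *: 'X_l.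
Proof.
move=> hp; apply/mpolyP => m; rewrite raddf_sum /=.
under eq_bigr do rewrite mcoeffZ mcoeffX.
have [/mdeg1P[l /eqP ->]|degm] := boolP (mdeg m == 1%N).
  rewrite (bigD1 l) //= eqxx mulr1 big1 ?addr0 // => j /negbTE ne_jl.
  by rewrite eq_mnm1 ne_jl mulr0.
rewrite big1 => [|j _]; last first.
  by case: eqP => [eq_jm|_]; [rewrite -eq_jm mdeg1 in degm | rewrite mulr0].
by apply: memN_msupp_eq0; apply: contra degm => /(dhomog_mf hp) ->.
Qed.

Lemma mderiv_homog1 (p : P) (l : 'I_n) :
  p \is 1.-homog -> p^`M(l) = (p@_U_(l))%:MP.
Proof.
move=> hp; rewrite {1}(homog1E hp) linear_sum (bigD1 l) //= big1 ?addr0.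
  by rewrite linearZ /= mderivXU eqxx mpolyC1 alg_mpolyC.
by move=> i /negbTE ne_il; rewrite linearZ /= mderivXU ne_il mpolyC0 scaler0.
Qed.

Lemma homog_of_graded_inj (f : {linear P -> P}) : injective f ->
    (forall d p, p \is d.-homog -> f p \is d.-homog) ->
  forall d p, f p \is d.-homog -> p \is d.-homog.
Proof.
move=> finj fgr d p hfp; rewrite homog_piE; apply/eqP/finj.
pose K := maxn (mmeasure mdeg p) d.+1.
have fpE : f p = \sum_(e < K) f (pihomog mdeg e p).
  rewrite {1}(pihomog_partitionE (leq_maxl _ d.+1 : (mmeasure mdeg p <= K)%N)).
  by rewrite linear_sum.
have fgr_pi e : f (pihomog mdeg e p) \is e.-homog by apply: fgr; apply: pihomogP.
rewrite -(pihomog_dE hfp) fpE [RHS]linear_sum.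
rewrite (bigD1 (Ordinal (leq_maxr _ d.+1 : (d < K)%N))) //=.
rewrite [pihomog mdeg d (f _)]pihomog_dE // [X in _ + X]big1 ?addr0 // => e ne_ed.
apply: (pihomog_ne0 _ (fgr_pi e)); apply: contra ne_ed => /eqP ed.
exact/eqP/val_inj.
Qed.

End Polynomials.

Section FreeAlgebra.
Variables (k : fieldType) (n : nat).
Local Notation F := (freealg k n).
Local Notation P := (mpoly.mpoly n k).

Lemma freealg_scalerAr (c : k) (f g : F) : c *: (f * g) = f * (c *: g).
Proof.
apply/malgP => w; rewrite monalg.mcoeffZ.
rewrite (mcoeffMlw _ (fsubset_refl _) (monalg.msuppZ_le c g)) monalg.mcoeffMl.
rewrite mulr_sumr; apply: eq_bigr => u _; rewrite mulr_sumr; apply: eq_bigr => v _.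
by rewrite monalg.mcoeffZ mulrnAr mulrCA.
Qed.

Definition freealg_gen (a : 'I_n + 'I_n) : F := mkmalgU ([:: a] : word n) 1.

Lemma mkmalgU_word (w : word n) (c : k) :
  mkmalgU w c = c *: \prod_(a <- w) freealg_gen a :> F.
Proof.
elim: w c => [|a w IHw] c.
  by apply/malgP => w'; rewrite big_nil monalg.mcoeffZ !mcoeffU mulr_natr.
by rewrite big_cons freealg_scalerAr -IHw malgM_def fgmulUU mul1r.
Qed.

Lemma fembedE (p : P) : fembed p = mpoly.mmap (GRing.in_alg F) (@fX k n) p.
Proof. by apply: eq_bigr => m _; rewrite /= mulr_algl. Qed.

Lemma fembed_is_linear : linear (@fembed k n).
Proof. by move=> c p q; rewrite !fembedE mmapD mmapZ /= mulr_algl. Qed.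

HB.instance Definition _ :=
  GRing.isLinear.Build k P F *:%R (@fembed k n) fembed_is_linear.

Lemma fembedXm (m : 'X_{1..n}) : fembed 'X_[m] = \prod_(i < n) fX k i ^+ m i.
Proof. by rewrite fembedE mmapX. Qed.

Lemma fembedX (i : 'I_n) : fembed 'X_i = fX k i.
Proof. by rewrite fembedE mmapX mmap1U. Qed.

Lemma fembedC (c : k) : fembed (c%:MP : P) = c%:A.
Proof. by rewrite fembedE mmapC. Qed.

Lemma fhomog0 d : fhomog d (0 : F).
Proof. by move=> w; rewrite monalg.msupp0. Qed.

Lemma fhomogD d (f g : F) : fhomog d f -> fhomog d g -> fhomog d (f + g).
Proof.
move=> hf hg w /(fsubsetP (monalg.msuppD_le f g)); rewrite in_fsetU.
by case/orP; [apply: hf | apply: hg].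
Qed.

Lemma fhomogZ d c (f : F) : fhomog d f -> fhomog d (c *: f).
Proof. by move=> hf w /(fsubsetP (monalg.msuppZ_le c f)); apply: hf. Qed.

Lemma fhomog_sum d (I : eqType) (r : seq I) (G : I -> F) :
  (forall i, i \in r -> fhomog d (G i)) -> fhomog d (\sum_(i <- r) G i).
Proof.
move=> hG; rewrite big_seq; apply: (big_ind (fhomog d)) => //.
  exact: fhomog0.
by move=> f g; apply: fhomogD.
Qed.

Lemma fhomogU (w : word n) c : fhomog (size w) (mkmalgU w c : F).
Proof. by move=> w' /(fsubsetP msuppU_le); rewrite in_fset1 => /eqP ->. Qed.

Lemma fhomog1 : fhomog 0 (1 : F).
Proof. exact: (@fhomogU [::] 1). Qed.

Lemma fhomogM d1 d2 (f g : F) :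
  fhomog d1 f -> fhomog d2 g -> fhomog (d1 + d2) (f * g).
Proof.
move=> hf hg w /monalg.msuppM_le [u [v [hu hv ->]]].
by rewrite /= size_cat (hf _ hu) (hg _ hv).
Qed.

Lemma fhomog_prod (I : Type) (r : seq I) (d : I -> nat) (G : I -> F) :
    (forall i, fhomog (d i) (G i)) ->
  fhomog (\sum_(i <- r) d i) (\prod_(i <- r) G i).
Proof.
move=> hG; elim: r => [|i r IHr]; first by rewrite !big_nil; apply: fhomog1.
by rewrite !big_cons; apply: fhomogM.
Qed.

Lemma fhomog_fembed d (p : P) : p \is d.-homog -> fhomog d (fembed p).
Proof.
move=> hp; apply: fhomog_sum => m /(dhomog_mf hp) <-; apply: fhomogZ.
change (fhomog (mdeg m) (\prod_(i < n) fX k i ^+ m i)); rewrite mdegE.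
apply: fhomog_prod => i; rewrite -[m i]muln1 mulnC.
elim: (m i) => [|e IHe]; first exact: fhomog1.
by rewrite exprS mulnS; apply: fhomogM => //; apply: fhomogU.
Qed.

Variable g : 'I_n + 'I_n -> F.

Definition word_eval (w : word n) : F := \prod_(a <- w) g a.

Lemma word_eval_is_mmorphism : monalg.mmorphism word_eval.
Proof. by split=> [u v|]; rewrite /word_eval ?big_nil // -big_cat. Qed.

HB.instance Definition _ :=
  monalg.isMultiplicative.Build (word n) F word_eval word_eval_is_mmorphism.

Fact freealg_lift_key : unit. Proof. by []. Qed.

(* Locked: comparing two distinct [UPpi br (freealg_lift g _)] terms by
   unfolding goes through the choice operator of the quotient and diverges. *)
Definition freealg_lift : F -> F :=
  locked_with freealg_lift_key (monalg.mmap (GRing.in_alg F) word_eval).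

Lemma freealg_liftE : freealg_lift = monalg.mmap (GRing.in_alg F) word_eval.
Proof. exact: locked_withE. Qed.

Lemma freealg_lift_is_linear : linear freealg_lift.
Proof.
by move=> c f h; rewrite freealg_liftE monalg.mmapD monalg.mmapZ /= mulr_algl.
Qed.

HB.instance Definition _ :=
  GRing.isLinear.Build k F F *:%R freealg_lift freealg_lift_is_linear.

Lemma freealg_lift_is_monoid_morphism : monoid_morphism freealg_lift.
Proof.
have alg_comm (f : F) (w w' : word n) :
    GRing.comm (GRing.in_alg F (monalg.mcoeff w f)) (word_eval w').
  by rewrite /GRing.comm mulr_algl -freealg_scalerAr mulr1.
rewrite freealg_liftE; split; first exact: monalg.mmap1.
exact: (monalg.commr_mmap_is_multiplicative alg_comm).1.
Qed.

HB.instance Definition _ :=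
  GRing.isMonoidMorphism.Build F F freealg_lift freealg_lift_is_monoid_morphism.

Lemma freealg_lift_gen a : freealg_lift (freealg_gen a) = g a.
Proof.
by rewrite freealg_liftE monalg.mmapU /= scale1r mul1r /word_eval big_seq1.
Qed.

Lemma fhomog_freealg_lift : (forall a, fhomog 1 (g a)) ->
  forall d f, fhomog d f -> fhomog d (freealg_lift f).
Proof.
move=> hg d f hf; rewrite freealg_liftE monalg.mmapE.
apply: fhomog_sum => w hw; rewrite /= mulr_algl -(hf w hw); apply: fhomogZ.
by rewrite -sum1_size /word_eval; apply: fhomog_prod.
Qed.

End FreeAlgebra.

Definition lie (R : pzRingType) (x y : R) := x * y - y * x.

Lemma lie_rmorph (R S : pzRingType) (f : {rmorphism R -> S}) (x y : R) :
  f (lie x y) = lie (f x) (f y).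
Proof. by rewrite /lie rmorphB !rmorphM. Qed.

Section EnvelopingAlgebra.
Variables (k : fieldType) (n : nat).
Local Notation P := (mpoly.mpoly n k).
Local Notation F := (freealg k n).
Variable br : P -> P -> P.
Local Notation I := (UPideal br).
Local Notation pi := (UPpi br).
Local Notation alpha := (UPalpha br).
Local Notation beta := (UPbeta br).

Lemma UPidealD f g : I f -> I g -> I (f + g).
Proof. by move=> [s ->] [t ->]; exists (s ++ t); rewrite big_cat. Qed.

Lemma UPidealMl a f : I f -> I (a * f).
Proof.
move=> [s ->]; exists [seq ((a * t.1.1, t.1.2), t.2) | t <- s].
by rewrite big_map mulr_sumr; apply: eq_bigr => t _ /=; rewrite !mulrA.
Qed.

Lemma UPidealMr a f : I f -> I (f * a).
Proof.
move=> [s ->]; exists [seq ((t.1.1, t.1.2 * a), t.2) | t <- s].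
by rewrite big_map mulr_suml; apply: eq_bigr => t _ /=; rewrite !mulrA.
Qed.

Lemma UPidealN f : I f -> I (- f).
Proof. by rewrite -mulN1r; apply: UPidealMl. Qed.

Lemma UPidealZ (c : k) f : I f -> I (c *: f).
Proof. by rewrite -mulr_algl; apply: UPidealMl. Qed.

Lemma UPideal_rel c i j : I (UPrel br c i j).
Proof. by exists [:: ((1, 1), (c, i, j))]; rewrite big_seq1 /= mul1r mulr1. Qed.

Lemma UPpiP f g : reflect (pi f = pi g) (pbool (I (f - g))).
Proof. exact: (@eqquotP _ _ (UP br)). Qed.

Lemma UPpi_eq f g : I (f - g) -> pi f = pi g.
Proof. by move=> h; apply/UPpiP/pboolP. Qed.

Lemma UPreprK (u : UP br) : pi (repr u) = u.
Proof. exact: reprK. Qed.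

Lemma UPideal_repr f : I (repr (pi f) - f).
Proof. by apply/pboolP/UPpiP; rewrite UPreprK. Qed.

Lemma UP_ind (Q : UP br -> Prop) : (forall f, Q (pi f)) -> forall u, Q u.
Proof. by move=> h u; rewrite -[u]UPreprK. Qed.

Definition UPzero : UP br := pi 0.
Definition UPopp (u : UP br) : UP br := pi (- repr u).

Lemma UPaddE f g : UPadd (pi f) (pi g) = pi (f + g).
Proof.
by apply: UPpi_eq; rewrite opprD addrACA; apply: UPidealD; apply: UPideal_repr.
Qed.

Lemma UPoppE f : UPopp (pi f) = pi (- f).
Proof. by apply: UPpi_eq; rewrite -opprD; apply/UPidealN/UPideal_repr. Qed.

Lemma UPscaleE c f : UPscale c (pi f) = pi (c *: f).
Proof. by apply: UPpi_eq; rewrite -scalerBr; apply/UPidealZ/UPideal_repr. Qed.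

Lemma UPmulE f g : UPmul (pi f) (pi g) = pi (f * g).
Proof.
apply: UPpi_eq.
have -> : repr (pi f) * repr (pi g) - f * g =
    (repr (pi f) - f) * repr (pi g) + f * (repr (pi g) - g).
  by rewrite mulrBl mulrBr addrA subrK.
by apply: UPidealD; [apply: UPidealMr | apply: UPidealMl]; apply: UPideal_repr.
Qed.

Lemma UPaddA : associative (@UPadd k n br).
Proof.
move=> u v w; elim/UP_ind: u => f; elim/UP_ind: v => g; elim/UP_ind: w => h.
by rewrite !UPaddE addrA.
Qed.

Lemma UPaddC : commutative (@UPadd k n br).
Proof.
by move=> u v; elim/UP_ind: u => f; elim/UP_ind: v => g; rewrite !UPaddE addrC.
Qed.

Lemma UPadd0 : left_id UPzero (@UPadd k n br).
Proof. by elim/UP_ind=> f; rewrite UPaddE add0r. Qed.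

Lemma UPaddN : left_inverse UPzero UPopp (@UPadd k n br).
Proof. by elim/UP_ind=> f; rewrite UPoppE UPaddE addNr. Qed.

HB.instance Definition _ := Choice.copy (UP br) {eq_quot (UPequiv br)}%qT.
HB.instance Definition _ :=
  GRing.isZmodule.Build (UP br) UPaddA UPaddC UPadd0 UPaddN.

Lemma UPpiD f g : pi f + pi g = pi (f + g).
Proof. exact: UPaddE. Qed.

Lemma UPscaleA c d (u : UP br) : UPscale c (UPscale d u) = UPscale (c * d) u.
Proof. by elim/UP_ind: u => f; rewrite !UPscaleE scalerA. Qed.

Lemma UPscale1 : left_id 1 (@UPscale k n br).
Proof. by elim/UP_ind=> f; rewrite UPscaleE scale1r. Qed.

Lemma UPscaleDr : right_distributive (@UPscale k n br) +%R.
Proof.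
move=> c u v; elim/UP_ind: u => f; elim/UP_ind: v => g.
by rewrite /= !(UPscaleE, UPpiD) scalerDr.
Qed.

Lemma UPscaleDl u : {morph (@UPscale k n br)^~ u : c d / c + d >-> (c + d)%R}.
Proof. by elim/UP_ind: u => f c d; rewrite /= !(UPscaleE, UPpiD) scalerDl. Qed.

HB.instance Definition _ :=
  GRing.Zmodule_isLmodule.Build k (UP br) UPscaleA UPscale1 UPscaleDr UPscaleDl.

Lemma UPmulA : associative (@UPmul k n br).
Proof.
move=> u v w; elim/UP_ind: u => f; elim/UP_ind: v => g; elim/UP_ind: w => h.
by rewrite !UPmulE mulrA.
Qed.

Lemma UPmul1 : left_id (UPone br) (@UPmul k n br).
Proof. by elim/UP_ind=> f; rewrite UPmulE mul1r. Qed.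

Lemma UPmulr1 : right_id (UPone br) (@UPmul k n br).
Proof. by elim/UP_ind=> f; rewrite UPmulE mulr1. Qed.

Lemma UPmulDl : left_distributive (@UPmul k n br) +%R.
Proof.
move=> u v w; elim/UP_ind: u => f; elim/UP_ind: v => g; elim/UP_ind: w => h.
by rewrite /= !(UPmulE, UPpiD) mulrDl.
Qed.

Lemma UPmulDr : right_distributive (@UPmul k n br) +%R.
Proof.
move=> u v w; elim/UP_ind: u => f; elim/UP_ind: v => g; elim/UP_ind: w => h.
by rewrite /= !(UPmulE, UPpiD) mulrDr.
Qed.

(* A possibly zero ring structure: this avoids proving that the relations
   generate a proper ideal. *)
HB.instance Definition _ :=
  GRing.Zmodule_isPzRing.Build (UP br) UPmulA UPmul1 UPmulr1 UPmulDl UPmulDr.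

Lemma UPpi_is_linear : linear pi.
Proof. by move=> c f g; rewrite -UPpiD -UPscaleE. Qed.

HB.instance Definition _ := GRing.isLinear.Build k F (UP br) *:%R pi UPpi_is_linear.

Lemma UPpi_is_monoid_morphism : monoid_morphism pi.
Proof. by split=> [|f g]; rewrite /= -?UPmulE. Qed.

HB.instance Definition _ :=
  GRing.isMonoidMorphism.Build F (UP br) pi UPpi_is_monoid_morphism.

Lemma UPscalerAl c (u v : UP br) : c *: (u * v) = c *: u * v.
Proof.
elim/UP_ind: u => f; elim/UP_ind: v => g.
by rewrite -rmorphM -!linearZ -rmorphM scalerAl.
Qed.

Lemma UPscalerAr c (u v : UP br) : c *: (u * v) = u * (c *: v).
Proof.
elim/UP_ind: u => f; elim/UP_ind: v => g.
by rewrite -rmorphM -!linearZ -rmorphM freealg_scalerAr.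
Qed.

Lemma UPpi_lie f g : lie (pi f) (pi g) = pi (lie f g).
Proof. exact/esym/lie_rmorph. Qed.

Lemma lie_sumZ (c d : 'I_n -> k) (u v : 'I_n -> UP br) :
  lie (\sum_(l < n) c l *: u l) (\sum_(m < n) d m *: v m) =
  \sum_(l < n) \sum_(m < n) (c l * d m) *: lie (u l) (v m).
Proof.
rewrite /lie !big_distrlr /= [X in _ - X]exchange_big /= -sumrB.
apply: eq_bigr => l _; rewrite -sumrB; apply: eq_bigr => m _.
by rewrite scalerBr -!UPscalerAl -!UPscalerAr !scalerA [d m * c l]mulrC.
Qed.

Lemma UPalpha_is_linear : linear alpha.
Proof. by move=> c p q; rewrite /UPalpha !linearP. Qed.

HB.instance Definition _ :=
  GRing.isLinear.Build k P (UP br) *:%R alpha UPalpha_is_linear.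

Lemma UPalphaX i : alpha 'X_i = pi (fX k i).
Proof. by rewrite /UPalpha fembedX. Qed.

Lemma UPalphaC c : alpha c%:MP = c *: (1 : UP br).
Proof. by rewrite /UPalpha fembedC linearZ rmorph1. Qed.

Lemma UPalphaX_comm i j : GRing.comm (alpha 'X_i) (alpha 'X_j).
Proof.
apply/eqP; rewrite -subr_eq0 !UPalphaX; apply/eqP.
rewrite [_ - _]UPpi_lie -(raddf0 pi); apply: UPpi_eq; rewrite subr0.
exact: (@UPideal_rel (@Ordinal 3 0 isT)).
Qed.

Lemma UPalphaXm m : alpha 'X_[m] = \prod_(i < n) alpha 'X_i ^+ m i.
Proof.
rewrite {1}/UPalpha fembedXm rmorph_prod; apply: eq_bigr => i _.
by rewrite rmorphXn UPalphaX.
Qed.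

Lemma UPalphaXmD m1 m2 : alpha 'X_[m1 + m2] = alpha 'X_[m1] * alpha 'X_[m2].
Proof.
rewrite !UPalphaXm -prodrM_comm => [|i j _ _].
  by apply: eq_bigr => i _; rewrite mnmDE exprD.
exact/commrX/commr_sym/commrX/UPalphaX_comm.
Qed.

Lemma UPalpha_is_monoid_morphism : monoid_morphism alpha.
Proof.
split=> [|p q].
  by rewrite -mpolyX0 UPalphaXm big1 // => i _; rewrite mnm0E expr0.
rewrite mpolyME linear_sum big_allpairs [in RHS](mpolyE p) [in RHS](mpolyE q).
rewrite !linear_sum big_distrl /=; apply: eq_bigr => m1 _.
rewrite big_distrr /=; apply: eq_bigr => m2 _.
by rewrite !linearZ /= UPalphaXmD -UPscalerAl -UPscalerAr scalerA.
Qed.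

HB.instance Definition _ :=
  GRing.isMonoidMorphism.Build P (UP br) alpha UPalpha_is_monoid_morphism.

Lemma UPbetaE p : beta p = \sum_(l < n) alpha p^`M(l) * pi (fY k l).
Proof. by rewrite /UPbeta rmorph_sum; apply: eq_bigr => l _; rewrite rmorphM. Qed.

Lemma UPbeta_is_linear : linear beta.
Proof.
move=> c p q; rewrite !UPbetaE scaler_sumr -big_split; apply: eq_bigr => l _.
by rewrite !linearP mulrDl UPscalerAl.
Qed.

HB.instance Definition _ :=
  GRing.isLinear.Build k P (UP br) *:%R beta UPbeta_is_linear.

Lemma UPbetaX i : beta 'X_i = pi (fY k i).
Proof.
rewrite UPbetaE (bigD1 i) //= big1 ?addr0 => [|l /negbTE ne_li].
  by rewrite mderivXU eqxx UPalphaC scale1r mul1r.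
by rewrite mderivXU eq_sym ne_li UPalphaC scale0r mul0r.
Qed.

Lemma UPbetaX_lie i j : lie (beta 'X_i) (beta 'X_j) = beta (br 'X_i 'X_j).
Proof.
rewrite !UPbetaX UPpi_lie; apply: UPpi_eq.
exact: (@UPideal_rel (@Ordinal 3 1 isT)).
Qed.

Lemma UPbeta_alphaX_lie i j : lie (beta 'X_i) (alpha 'X_j) = alpha (br 'X_i 'X_j).
Proof.
rewrite UPbetaX UPalphaX UPpi_lie; apply: UPpi_eq.
exact: (@UPideal_rel (@Ordinal 3 2 isT)).
Qed.

Definition UP_alg_hom (t : UP br -> UP br) : Prop :=
  [/\ {morph t : u v / u + v}, forall c, {morph t : u / c *: u},
      {morph t : u v / u * v} & t 1 = 1].

Lemma UP_alg_hom_id : UP_alg_hom id.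
Proof. by []. Qed.

Lemma UP_alg_hom_comp t1 t2 :
  UP_alg_hom t1 -> UP_alg_hom t2 -> UP_alg_hom (t1 \o t2).
Proof.
move=> [D1 Z1 M1 O1] [D2 Z2 M2 O2]; split=> [u v|c u|u v|] /=.
- by rewrite D2 D1.
- by rewrite Z2 Z1.
- by rewrite M2 M1.
- by rewrite O2 O1.
Qed.

Lemma UP_alg_hom_eq t1 t2 : UP_alg_hom t1 -> UP_alg_hom t2 ->
    (forall i, t1 (alpha 'X_i) = t2 (alpha 'X_i)) ->
    (forall i, t1 (beta 'X_i) = t2 (beta 'X_i)) ->
  t1 =1 t2.
Proof.
have hom0 t : UP_alg_hom t -> t 0 = 0.
  by case=> _ Zt _ _; rewrite -{1}(scale0r (0 : UP br)) Zt scale0r.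
move=> hom1 hom2 eqX eqY; have [D1 Z1 M1 O1] := hom1; have [D2 Z2 M2 O2] := hom2.
elim/UP_ind => f; rewrite [f]monalgE rmorph_sum /=.
rewrite (big_morph t1 D1 (hom0 _ hom1)) (big_morph t2 D2 (hom0 _ hom2)).
apply: eq_bigr => w _; rewrite mkmalgU_word linearZ Z1 Z2 /= rmorph_prod /=.
rewrite (big_morph t1 M1 O1) (big_morph t2 M2 O2); congr (_ *: _).
apply: eq_bigr => -[i|i] _.
- by have := eqX i; rewrite UPalphaX.
- by have := eqY i; rewrite UPbetaX.
Qed.

End EnvelopingAlgebra.

Section PoissonBracket.
Variables (k : fieldType) (n : nat).
Local Notation P := (mpoly.mpoly n k).
Variable br : P -> P -> P.
Hypothesis hbr : is_poisson_bracket br.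

Lemma poisson_bracket_bilinear : bilinear_for *:%R *:%R br.
Proof. by case: hbr => hl hr _ _ _; split=> r c p q; [apply: hl | apply: hr]. Qed.

HB.instance Definition _ :=
  bilinear_isBilinear.Build k P P P *:%R *:%R br poisson_bracket_bilinear.

Lemma bracket_homog1 p q : p \is 1.-homog -> q \is 1.-homog ->
  br p q = \sum_(l < n) \sum_(m < n) (p@_U_(l) * q@_U_(m)) *: br 'X_l 'X_m.
Proof.
move=> hp hq; rewrite {1}(homog1E hp) {1}(homog1E hq) linear_sumlz.
apply: eq_bigr => l _; rewrite linearZl_LR /= linear_sumr /= scaler_sumr.
by apply: eq_bigr => m _; rewrite linearZr_LR /= scalerA.
Qed.

Lemma lie_homog1 (f g h : {linear P -> UP br}) :
    (forall l m, lie (f 'X_l) (g 'X_m) = h (br 'X_l 'X_m)) ->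
  forall p q, p \is 1.-homog -> q \is 1.-homog -> lie (f p) (g q) = h (br p q).
Proof.
move=> hfg p q hp hq.
have lin_comb (f' : {linear P -> UP br}) (c : 'I_n -> k) :
    f' (\sum_(l < n) c l *: 'X_l) = \sum_(l < n) c l *: f' 'X_l.
  by rewrite linear_sum; apply: eq_bigr => l _; rewrite linearZ.
rewrite (bracket_homog1 hp hq) {1}(homog1E hp) {1}(homog1E hq) !lin_comb lie_sumZ.
rewrite linear_sum; apply: eq_bigr => l _; rewrite linear_sum; apply: eq_bigr => m _.
by rewrite linearZ hfg.
Qed.

End PoissonBracket.

Section GradedPoissonAutomorphism.
Variables (k : fieldType) (n : nat).
Local Notation P := (mpoly.mpoly n k).
Local Notation F := (freealg k n).
Variables (br : P -> P -> P) (phi : P -> P).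
Hypotheses (hbr : is_poisson_bracket br) (hphi : graded_poisson_aut br phi).
Local Notation pi := (UPpi br).
Local Notation alpha := (UPalpha br).
Local Notation beta := (UPbeta br).

Lemma graded_poisson_aut_linear : linear phi.
Proof. by case: hphi => _ _ [phiD phiZ _ _] _ c p q; rewrite phiD phiZ. Qed.

HB.instance Definition _ :=
  GRing.isLinear.Build k P P *:%R phi graded_poisson_aut_linear.

Lemma graded_poisson_aut_monoid_morphism : monoid_morphism phi.
Proof. by case: hphi => _ _ [_ _ phiM phi1] _. Qed.

HB.instance Definition _ :=
  GRing.isMonoidMorphism.Build P P phi graded_poisson_aut_monoid_morphism.

Lemma graded_poisson_aut_homog1 i : phi 'X_i \is 1.-homog.
Proof. by case: hphi => _ phi_gr _ _; apply: phi_gr; rewrite dhomogX /= mdeg1. Qed.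

Lemma graded_poisson_aut_inv (psi : P -> P) :
  cancel phi psi -> cancel psi phi -> graded_poisson_aut br psi.
Proof.
move=> phiK psiK; have phi_inj := can_inj phiK.
case: hphi => _ phi_gr _ phi_br; split.
- by exists phi.
- by move=> d p hp; apply: (homog_of_graded_inj phi_inj phi_gr); rewrite /= psiK.
- split=> [p q|c p|p q|]; apply: phi_inj;
    by rewrite ?(rmorphD, linearZ, rmorphM, rmorph1) /= ?psiK.
- by move=> p q; apply: phi_inj; rewrite phi_br !psiK.
Qed.

Definition aut_gen (a : 'I_n + 'I_n) : F :=
  match a with
  | inl i => fembed (phi 'X_i)
  | inr i => \sum_(j < n) fembed (phi 'X_i)^`M(j) * fY k j
  end.

Local Notation lift := (freealg_lift aut_gen).

Lemma aut_gen_fhomog a : fhomog 1 (aut_gen a).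
Proof.
case: a => i /=; first exact/fhomog_fembed/graded_poisson_aut_homog1.
apply: fhomog_sum => j _.
rewrite (mderiv_homog1 j (graded_poisson_aut_homog1 i)) fembedC.
by apply: (@fhomogM _ _ 0 1); [apply/fhomogZ/fhomog1 | apply: fhomogU].
Qed.

Lemma UPpi_lift_fX i : pi (lift (fX k i)) = alpha (phi 'X_i).
Proof. exact: (congr1 pi (freealg_lift_gen aut_gen (inl i))). Qed.

Lemma UPpi_lift_fY i : pi (lift (fY k i)) = beta (phi 'X_i).
Proof. exact: (congr1 pi (freealg_lift_gen aut_gen (inr i))). Qed.

Lemma UPpi_lift_fembed p : pi (lift (fembed p)) = alpha (phi p).
Proof.
rewrite [p]mpolyE [fembed _]linear_sum [lift _]linear_sum [pi _]linear_sum.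
rewrite [phi _]linear_sum [alpha _]linear_sum; apply: eq_bigr => m _ /=.
rewrite [fembed _]linearZ [lift _]linearZ [pi _]linearZ.
rewrite [phi _]linearZ [alpha _]linearZ /=; congr (_ *: _).
rewrite fembedXm mpolyXE_id !rmorph_prod; apply: eq_bigr => i _.
by rewrite !rmorphXn /= UPpi_lift_fX.
Qed.

Lemma UPpi_lift_beta p :
  pi (lift (\sum_(l < n) fembed p^`M(l) * fY k l)) = beta (phi p).
Proof.
rewrite [lift _]linear_sum /= [pi _]linear_sum /= [RHS]UPbetaE.
under eq_bigr do rewrite [lift _]rmorphM [pi _]rmorphM /=
  UPpi_lift_fembed UPpi_lift_fY UPbetaE mulr_sumr.
rewrite exchange_big /=; apply: eq_bigr => r _.
rewrite mderiv_lrmorph rmorph_sum mulr_suml; apply: eq_bigr => l _.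
by rewrite rmorphM mulrA.
Qed.

Lemma UPpi_lift_rel c i j : pi (lift (UPrel br c i j)) = 0.
Proof.
have phi_br : forall p q, phi (br p q) = br (phi p) (phi q) by case: hphi.
have [hXi hXj] := (graded_poisson_aut_homog1 i, graded_poisson_aut_homog1 j).
rewrite /UPrel; case: ifP => _; [|case: ifP => _].
- rewrite -/(lie (fX k i) (fX k j)) (lie_rmorph lift) (lie_rmorph pi) /=.
  rewrite [X in lie X _]UPpi_lift_fX [X in lie _ X]UPpi_lift_fX.
  by rewrite -lie_rmorph /lie mulrC subrr rmorph0.
- rewrite -/(lie (fY k i) (fY k j)) [lift _]rmorphB [pi _]rmorphB /=.
  rewrite (lie_rmorph lift) (lie_rmorph pi) /= [X in _ - X]UPpi_lift_beta.
  rewrite [X in lie X _]UPpi_lift_fY [X in lie _ X]UPpi_lift_fY phi_br.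
  by rewrite (lie_homog1 hbr (@UPbetaX_lie _ _ br) hXi hXj) subrr.
- rewrite -/(lie (fY k i) (fX k j)) [lift _]rmorphB [pi _]rmorphB /=.
  rewrite (lie_rmorph lift) (lie_rmorph pi) /= [X in _ - X]UPpi_lift_fembed.
  rewrite [X in lie X _]UPpi_lift_fY [X in lie _ X]UPpi_lift_fX phi_br.
  by rewrite (lie_homog1 hbr (@UPbeta_alphaX_lie _ _ br) hXi hXj) subrr.
Qed.

Lemma UPpi_lift_ideal f : UPideal br f -> pi (lift f) = 0.
Proof.
move=> [s ->]; rewrite [lift _]linear_sum /= [pi _]linear_sum big1 // => t _ /=.
by rewrite !rmorphM /= UPpi_lift_rel mulr0 mul0r.
Qed.

Definition UPaut (u : UP br) : UP br := pi (lift (repr u)).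

Lemma UPautE f : UPaut (pi f) = pi (lift f).
Proof.
apply/eqP; rewrite -subr_eq0 -[_ - _]rmorphB -[lift _ - _]rmorphB.
exact/eqP/UPpi_lift_ideal/UPideal_repr.
Qed.

Lemma UPaut_gen a : UPaut (pi (freealg_gen k a)) = pi (aut_gen a).
Proof. by rewrite UPautE freealg_lift_gen. Qed.

Lemma UPalpha_aut p : alpha (phi p) = UPaut (alpha p).
Proof. by rewrite UPautE UPpi_lift_fembed. Qed.

Lemma UPbeta_aut p : beta (phi p) = UPaut (beta p).
Proof. by rewrite UPautE UPpi_lift_beta. Qed.

Lemma UPaut_alg_hom : UP_alg_hom UPaut.
Proof.
split=> [u v|c u|u v|].
- elim/UP_ind: u => f; elim/UP_ind: v => g.
  by rewrite -rmorphD !UPautE !rmorphD.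
- by elim/UP_ind: u => f; rewrite -linearZ !UPautE !linearZ.
- elim/UP_ind: u => f; elim/UP_ind: v => g.
  by rewrite -rmorphM !UPautE !rmorphM.
- by rewrite -(rmorph1 pi) UPautE !rmorph1.
Qed.

Lemma UPaut_graded d u : UPdeg d u -> UPdeg d (UPaut u).
Proof.
case=> f [hf ->]; exists (lift f); split; last exact: UPautE.
exact: fhomog_freealg_lift aut_gen_fhomog _ _ hf.
Qed.

Lemma UPaut_unique psi : UP_alg_hom psi ->
    (forall p, alpha (phi p) = psi (alpha p)) ->
    (forall p, beta (phi p) = psi (beta p)) ->
  psi =1 UPaut.
Proof.
move=> hom alpha_psi beta_psi; apply: (UP_alg_hom_eq hom UPaut_alg_hom) => i.
  by rewrite -alpha_psi UPalpha_aut.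
by rewrite -beta_psi UPbeta_aut.
Qed.

End GradedPoissonAutomorphism.

Arguments UPaut {k n} br phi u.

Lemma UPaut_cancel (k : fieldType) (n : nat)
    (br : mpoly.mpoly n k -> mpoly.mpoly n k -> mpoly.mpoly n k)
    (phi phi' : mpoly.mpoly n k -> mpoly.mpoly n k) :
    is_poisson_bracket br ->
    graded_poisson_aut br phi -> graded_poisson_aut br phi' ->
  cancel phi phi' -> cancel (UPaut br phi) (UPaut br phi').
Proof.
move=> hbr hphi hphi' phiK.
have hom := UP_alg_hom_comp (UPaut_alg_hom hbr hphi') (UPaut_alg_hom hbr hphi).
apply: (UP_alg_hom_eq hom (UP_alg_hom_id _)) => i /=.
  by rewrite -(UPalpha_aut hbr hphi) -(UPalpha_aut hbr hphi') phiK.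
by rewrite -(UPbeta_aut hbr hphi) -(UPbeta_aut hbr hphi') phiK.
Qed.

Theorem lemma2p3 (k : closedFieldType) (n : nat)
    (br : mpoly.mpoly n k -> mpoly.mpoly n k -> mpoly.mpoly n k)
    (phi : mpoly.mpoly n k -> mpoly.mpoly n k) :
  [pchar k] =i pred0 ->
  is_poisson_bracket br ->
  is_quadratic br ->
  graded_poisson_aut br phi ->
  exists psi : UP br -> UP br,
    [/\ UPgraded_aut psi,
        forall f : mpoly.mpoly n k, UPalpha br (phi f) = psi (UPalpha br f),
        forall f : mpoly.mpoly n k, UPbeta br (phi f) = psi (UPbeta br f),
        (forall i : 'I_n, psi (UPpi br (fX k i)) = UPalpha br (phi 'X_i)
          /\ psi (UPpi br (fY k i)) =
               UPpi br (\sum_(j < n) fembed (mpoly.mderiv j (phi 'X_i)) * fY k j))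
      & forall psi' : UP br -> UP br,
          UPgraded_aut psi' ->
          (forall f : mpoly.mpoly n k, UPalpha br (phi f) = psi' (UPalpha br f)) ->
          (forall f : mpoly.mpoly n k, UPbeta br (phi f) = psi' (UPbeta br f)) ->
          forall u : UP br, psi' u = psi u].
Proof.
move=> _ hbr _ hphi.
have [[phi_inv phiK phi_invK] _ _ _] := hphi.
have hphi_inv := graded_poisson_aut_inv hphi phiK phi_invK.
exists (UPaut br phi); split.
- split; [|exact: UPaut_graded hbr hphi | exact: UPaut_alg_hom hbr hphi].
  by exists (UPaut br phi_inv); apply: UPaut_cancel.
- exact: UPalpha_aut hbr hphi.
- exact: UPbeta_aut hbr hphi.
- by move=> i; split; [exact: (UPaut_gen hbr hphi (inl i)) |
                        exact: (UPaut_gen hbr hphi (inr i))].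
- by move=> psi' [_ _ hom'] alpha' beta'; apply: UPaut_unique.
Qed.
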